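(* Let $\mathcal{X}$ be a connected $n$-premaniplex with base flag $x_0$, let $(\mathcal{Y},\eta)$ be an $(n,m)$-voltage operator with $\mathcal{Y}$ connected and base flag $y_0$, let $N=\operatorname{Stab}_{\mathcal{C}^n}(x_0)$, $L=\operatorname{Stab}_{\mathcal{C}^m}(y_0)$, and let $\zeta:L\to\mathcal{C}^n$ be $\zeta(\omega)=\eta(W_\omega(y_0))$. Then $\operatorname{Stab}_{\mathcal{C}^m}(x_0,y_0)=\zeta^{-1}(N)$. In particular, if $\mathcal{X}\rtimes_\eta\mathcal{Y}$ is connected, it is isomorphic to the coset premaniplex $\mathcal{C}^m/\zeta^{-1}(N)$, with $(x_0,y_0)$ corresponding to the coset $\zeta^{-1}(N)$.
   Context: An $n$-premaniplex is an edge-coloured graph (semi-edges and parallel edges allowed) with colours $\{0,\dots,n-1\}$ such that every vertex (flag) is the start of exactly one dart of each colour, and for $|i-j|\ge2$ alternating $i,j$-paths of length 4 are closed; $x^i$ is the $i$-adjacent flag of $x$. $\mathcal{C}^n=\langle r_0,\dots,r_{n-1}\mid r_i^2,\ (r_ir_j)^2\ (|i-j|\ge2)\rangle$ acts on the left on flags by $r_ix=x^i$. For a subgroup $K\le\mathcal{C}^m$, the coset premaniplex $\mathcal{C}^m/K$ has flags the left cosets $\omega K$, with $(\omega K)^i=r_i\omega K$. For a flag $y$ of an $m$-premaniplex $\mathcal{Y}$ and $\omega\in\mathcal{C}^m$, $W_\omega(y)$ is the homotopy class of paths from $y$ whose colour sequence $i_1,\dots,i_k$ satisfies $r_{i_k}\cdots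 r_{i_1}=\omega$; these form the fundamental groupoid $\Pi(\mathcal{Y})$. A voltage assignment $\eta:\Pi(\mathcal{Y})\to\mathcal{C}^n$ satisfies $\eta(W_1W_2)=\eta(W_2)\eta(W_1)$; $(\mathcal{Y},\eta)$ is an $(n,m)$-voltage operator. $\mathcal{X}\rtimes_\eta\mathcal{Y}$ has flags $\mathcal{X}\times\mathcal{Y}$ and $(x,y)^i=(\eta(W_{r_i}(y))x,r_iy)$, $i\in\{0,\dots,m-1\}$; hence $\omega(x,y)=(\eta(W_\omega(y))x,\omega y)$. *)

From Stdlib Require Import Relations ClassicalEpsilon.
From HB Require Import structures.
From mathcomp Require Import all_boot.

Set Implicit Arguments.
Unset Strict Implicit.
Unset Printing Implicit Defensive.

Definition far (i j : nat) : bool := (i.+1 < j) || (j.+1 < i).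

(* ---------- The group C^n = < r_0..r_{n-1} | r_i^2, (r_i r_j)^2 (|i-j|>=2) > ----
   An element is represented by a word [:: a1; ...; ak] standing for
   r_{a1} r_{a2} ... r_{ak}; two words represent the same element iff they are
   related by [ceq], the congruence generated by the relators (since all
   generators are involutions, the monoid presentation gives the group). *)
Inductive cstep (n : nat) : seq 'I_n -> seq 'I_n -> Prop :=
| cstep_sq (s t : seq 'I_n) (i : 'I_n) :
    cstep (s ++ [:: i; i] ++ t) (s ++ t)
| cstep_rel (s t : seq 'I_n) (i j : 'I_n) :
    far i j -> cstep (s ++ [:: i; j; i; j] ++ t) (s ++ t).

Definition ceq (n : nat) : relation (seq 'I_n) :=
  clos_refl_sym_trans _ (@cstep n).

Definition is_premaniplex (n : nat) (F : Type) (adj : 'I_n -> F -> F) : Prop :=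
  (forall i x, adj i (adj i x) = x) /\
  (forall (i j : 'I_n) x, far i j -> adj j (adj i (adj j (adj i x))) = x).

Definition act (n : nat) (F : Type) (adj : 'I_n -> F -> F) (w : seq 'I_n) (x : F)
  : F := foldr adj x w.

Definition connected (n : nat) (F : Type) (adj : 'I_n -> F -> F) : Prop :=
  forall x y : F, exists w : seq 'I_n, act adj w x = y.

Definition Stab (n : nat) (F : Type) (adj : 'I_n -> F -> F) (x : F)
  : seq 'I_n -> Prop := fun w => act adj w x = x.

(* ---------- voltage operators ----------
   Elements of the fundamental groupoid are W_omega(y), i.e. pairs (y, omega);
   eta y w := eta(W_w(y)).  It must depend only on the group element w, and
   eta(W1 W2) = eta(W2) eta(W1), i.e.
   eta(W_{w2 w1}(y)) = eta(W_{w2}(w1 y)) eta(W_{w1}(y)). *)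
Definition is_voltage (n m : nat) (FY : Type) (adjY : 'I_m -> FY -> FY)
  (eta : FY -> seq 'I_m -> seq 'I_n) : Prop :=
  (forall y w w', ceq w w' -> ceq (eta y w) (eta y w')) /\
  (forall y w1 w2,
      ceq (eta y (w2 ++ w1)) (eta (act adjY w1 y) w2 ++ eta y w1)).

Definition vprod_adj (n m : nat) (FX FY : Type) (adjX : 'I_n -> FX -> FX)
  (adjY : 'I_m -> FY -> FY) (eta : FY -> seq 'I_m -> seq 'I_n)
  (i : 'I_m) (z : FX * FY) : FX * FY :=
  (act adjX (eta z.2 [:: i]) z.1, adjY i z.2).

(* zeta^{-1}(N) where L = Stab(y0), zeta(w) = eta(W_w(y0)), N = Stab(x0) *)
Definition zeta_preim (n m : nat) (FX FY : Type) (adjX : 'I_n -> FX -> FX)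
  (adjY : 'I_m -> FY -> FY) (eta : FY -> seq 'I_m -> seq 'I_n)
  (x0 : FX) (y0 : FY) : seq 'I_m -> Prop :=
  fun w => Stab adjY y0 w /\ Stab adjX x0 (eta y0 w).

(* ---------- coset premaniplex C^n / K ----------
   the left coset wK as the set of words representing its elements *)
Definition lcoset (n : nat) (K : seq 'I_n -> Prop) (w : seq 'I_n)
  : seq 'I_n -> Prop := fun u => exists2 k, K k & ceq u (w ++ k).

Definition coset_flag (n : nat) (K : seq 'I_n -> Prop) : Type :=
  {S : seq 'I_n -> Prop | exists w, S = lcoset K w}.

Definition coset_rep (n : nat) (K : seq 'I_n -> Prop) (S : coset_flag K)
  : seq 'I_n :=
  proj1_sig (constructive_indefinite_description _ (proj2_sig S)).

Definition coset_adj (n : nat) (K : seq 'I_n -> Prop) (i : 'I_n)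
  (S : coset_flag K) : coset_flag K :=
  exist (fun T => exists w, T = lcoset K w) (lcoset K (i :: coset_rep S))
        (ex_intro _ (i :: coset_rep S) erefl).

Definition pm_iso (n : nat) (F1 F2 : Type) (adj1 : 'I_n -> F1 -> F1)
  (adj2 : 'I_n -> F2 -> F2) (f : F1 -> F2) : Prop :=
  bijective f /\ (forall i x, f (adj1 i x) = adj2 i (f x)).

From mathcomp Require Import all_boot.
From Stdlib Require Import Relations FunctionalExtensionality PropExtensionality.
From Stdlib Require Import ProofIrrelevance ClassicalEpsilon.

(* The action of C^m on the flags of X ⋊_η Y is ω(x, y) = (η(W_ω(y)) x, ω y),
   so ω fixes (x0, y0) exactly when ω ∈ L and ζ(ω) ∈ N.  The second part is the
   orbit–stabiliser correspondence for a transitive action: a connected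
   premaniplex is the coset premaniplex of the stabiliser of any base flag, the
   flag ω z0 corresponding to the coset ω Stab(z0). *)

Set Implicit Arguments.
Unset Strict Implicit.
Unset Printing Implicit Defensive.

Lemma pred_ext (A : Type) (P Q : A -> Prop) : (forall a, P a <-> Q a) -> P = Q.
Proof.
by move=> PQ; apply: functional_extensionality => a; apply: propositional_extensionality.
Qed.

Section Words.

Variable k : nat.
Implicit Types u v w s t : seq 'I_k.

Lemma ceq_cat2 s t u v : ceq u v -> ceq (s ++ u ++ t) (s ++ v ++ t).
Proof.
elim=> [a b [s' t' i | s' t' i j ij] | a | a b _ | a b c _ ab _ bc].
- by apply: rst_step; move: (cstep_sq (s ++ s') (t' ++ t) i); rewrite -!catA.
- by apply: rst_step; move: (cstep_rel (s ++ s') (t' ++ t) ij); rewrite -!catA.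
- exact: rst_refl.
- exact: rst_sym.
- exact: rst_trans ab bc.
Qed.

Lemma ceq_cat_rev w : ceq (w ++ rev w) [::].
Proof.
elim: w => [|i w IHw]; first exact: rst_refl.
rewrite rev_cons -cats1.
apply: (@rst_trans _ _ _ ([:: i] ++ [::] ++ [:: i])).
  by have := ceq_cat2 [:: i] [:: i] IHw; rewrite -!catA.
exact: rst_step (@cstep_sq k [::] [::] i).
Qed.

Lemma ceq_rev_cat w : ceq (rev w ++ w) [::].
Proof. by have := ceq_cat_rev (rev w); rewrite revK. Qed.

End Words.

Section Action.

Variables (k : nat) (F : Type) (adj : 'I_k -> F -> F).
Implicit Types u v w : seq 'I_k.

Lemma act_cat u v z : act adj (u ++ v) z = act adj u (act adj v z).
Proof. exact: foldr_cat. Qed.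

Definition ceq_invariant : Prop :=
  forall u v z, ceq u v -> act adj u z = act adj v z.

Lemma premaniplex_ceq_invariant : is_premaniplex adj -> ceq_invariant.
Proof.
move=> [adjK adj_far] u v z.
elim=> [a b [s t i | s t i j ij] | // | a b _ -> // | a b c _ -> _ -> //].
  by rewrite !act_cat /= adjK.
by rewrite !act_cat /= adj_far // /far orbC.
Qed.

Lemma ceq_invariant_premaniplex : ceq_invariant -> is_premaniplex adj.
Proof.
move=> inv; split=> [i x | i j x ij].
  exact: inv [:: i; i] [::] x (rst_step _ _ _ _ (@cstep_sq k [::] [::] i)).
have ji : far j i by rewrite /far orbC.
exact: inv [:: j; i; j; i] [::] x (rst_step _ _ _ _ (@cstep_rel k [::] [::] j i ji)).
Qed.

Hypothesis adj_inv : ceq_invariant.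

Lemma act_revK w z : act adj (rev w) (act adj w z) = z.
Proof. by rewrite -act_cat; apply: adj_inv (ceq_rev_cat w). Qed.

End Action.

Section VoltageProduct.

Variables (n m : nat) (FX : Type) (adjX : 'I_n -> FX -> FX).
Variables (FY : Type) (adjY : 'I_m -> FY -> FY) (eta : FY -> seq 'I_m -> seq 'I_n).
Hypotheses (adjX_pm : is_premaniplex adjX) (adjY_pm : is_premaniplex adjY).
Hypothesis eta_voltage : is_voltage adjY eta.

Local Notation vadj := (vprod_adj adjX adjY eta).

Let adjX_inv := premaniplex_ceq_invariant adjX_pm.

(* The cocycle rule at ω1 = ω2 = 1 makes η(W_1(y)) idempotent, hence trivial. *)
Lemma act_voltage_nil y x : act adjX (eta y [::]) x = x.
Proof.
set e := eta y [::].
have e_idem : act adjX e x = act adjX e (act adjX e x).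
  by rewrite -act_cat; apply: adjX_inv (eta_voltage.2 y [::] [::]).
by rewrite -[RHS](act_revK adjX_inv e x) [in RHS]e_idem act_revK.
Qed.

Lemma act_vprod w x y :
  act vadj w (x, y) = (act adjX (eta y w) x, act adjY w y).
Proof.
elim: w => [|i w IHw] /=; first by rewrite act_voltage_nil.
rewrite IHw /vprod_adj /=.
by rewrite (adjX_inv x (eta_voltage.2 y w [:: i])) act_cat.
Qed.

Lemma vprod_premaniplex : is_premaniplex vadj.
Proof.
apply: ceq_invariant_premaniplex => u v [x y] uv.
rewrite !act_vprod (premaniplex_ceq_invariant adjY_pm y uv).
by rewrite (adjX_inv x (eta_voltage.1 y u v uv)).
Qed.

Lemma Stab_vprod x0 y0 w :
  Stab vadj (x0, y0) w <-> zeta_preim adjX adjY eta x0 y0 w.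
Proof.
rewrite /Stab /zeta_preim /Stab act_vprod.
by split=> [[] | []] -> ->.
Qed.

End VoltageProduct.

Lemma coset_flag_inj (k : nat) (K : seq 'I_k -> Prop) (S T : coset_flag K) :
  proj1_sig S = proj1_sig T -> S = T.
Proof. exact: (eq_sig_hprop (fun _ => proof_irrelevance _)). Qed.

Lemma coset_repE (k : nat) (K : seq 'I_k -> Prop) (S : coset_flag K) :
  proj1_sig S = lcoset K (coset_rep S).
Proof. exact: proj2_sig (constructive_indefinite_description _ (proj2_sig S)). Qed.

Section CosetPremaniplex.

Variables (k : nat) (F : Type) (adj : 'I_k -> F -> F) (z0 : F).
Hypothesis adj_pm : is_premaniplex adj.

Local Notation K := (Stab adj z0).

Let adj_inv := premaniplex_ceq_invariant adj_pm.

Lemma lcoset_Stab_sub u v :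
  act adj u z0 = act adj v z0 -> forall t, lcoset K u t -> lcoset K v t.
Proof.
move=> uv t [s Ks ts]; exists (rev v ++ u ++ s).
  by rewrite /Stab !act_cat Ks uv act_revK.
apply: rst_trans ts _.
have := ceq_cat2 [::] (u ++ s) (rst_sym _ _ _ _ (ceq_cat_rev v)).
by rewrite /= !catA.
Qed.

Lemma lcoset_StabP u v :
  lcoset K u = lcoset K v <-> act adj u z0 = act adj v z0.
Proof.
split=> uv; last by apply: pred_ext => t; split; apply: lcoset_Stab_sub.
have : lcoset K u u by exists [::]; rewrite ?cats0 //; apply: rst_refl.
by rewrite uv => -[s Ks /adj_inv ->]; rewrite act_cat Ks.
Qed.

Lemma lcoset_Stab_nil : lcoset K [::] = K.
Proof.
apply: pred_ext => u; split=> [[s Ks /adj_inv us] | Ku].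
  by rewrite /Stab us.
by exists u; last exact: rst_refl.
Qed.

Hypothesis adj_conn : connected adj.

Definition word_to (z : F) : seq 'I_k :=
  proj1_sig (constructive_indefinite_description _ (adj_conn z0 z)).

Lemma act_word_to z : act adj (word_to z) z0 = z.
Proof. exact: proj2_sig (constructive_indefinite_description _ (adj_conn z0 z)). Qed.

Definition coset_of_flag (z : F) : coset_flag K :=
  exist _ (lcoset K (word_to z)) (ex_intro _ (word_to z) erefl).

Definition flag_of_coset (S : coset_flag K) : F := act adj (coset_rep S) z0.

Lemma coset_of_flagK : cancel coset_of_flag flag_of_coset.
Proof.
move=> z; rewrite /flag_of_coset -[RHS]act_word_to.
by apply/lcoset_StabP; rewrite -coset_repE.
Qed.

Lemma flag_of_cosetK : cancel flag_of_coset coset_of_flag.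
Proof.
move=> S; apply: coset_flag_inj; rewrite [RHS]coset_repE /=.
by apply/lcoset_StabP; rewrite act_word_to.
Qed.

Lemma coset_of_flag_adj i z : coset_of_flag (adj i z) = coset_adj i (coset_of_flag z).
Proof.
apply: coset_flag_inj => /=; apply/lcoset_StabP => /=.
by rewrite act_word_to -/(flag_of_coset _) coset_of_flagK.
Qed.

Lemma coset_of_flag_base : proj1_sig (coset_of_flag z0) = K.
Proof. by apply: etrans lcoset_Stab_nil; apply/lcoset_StabP; rewrite act_word_to. Qed.

Theorem connected_premaniplex_coset_iso :
  exists phi : F -> coset_flag K,
    pm_iso adj (@coset_adj k K) phi /\ proj1_sig (phi z0) = K.
Proof.
exists coset_of_flag; split; last exact: coset_of_flag_base.
split; last exact: coset_of_flag_adj.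
exact: Bijective coset_of_flagK flag_of_cosetK.
Qed.

End CosetPremaniplex.

Theorem lemma5p2 (n m : nat)
  (FX : Type) (adjX : 'I_n -> FX -> FX) (x0 : FX)
  (FY : Type) (adjY : 'I_m -> FY -> FY) (y0 : FY)
  (eta : FY -> seq 'I_m -> seq 'I_n) :
  is_premaniplex adjX -> connected adjX ->
  is_premaniplex adjY -> connected adjY ->
  is_voltage adjY eta ->
  (forall w : seq 'I_m,
      Stab (vprod_adj adjX adjY eta) (x0, y0) w <->
      zeta_preim adjX adjY eta x0 y0 w) /\
  (connected (vprod_adj adjX adjY eta) ->
   exists phi : FX * FY -> coset_flag (zeta_preim adjX adjY eta x0 y0),
     pm_iso (vprod_adj adjX adjY eta)
            (@coset_adj m (zeta_preim adjX adjY eta x0 y0)) phi /\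
     proj1_sig (phi (x0, y0)) = zeta_preim adjX adjY eta x0 y0).
Proof.
move=> adjX_pm _ adjY_pm _ eta_voltage.
have stabE := Stab_vprod adjX_pm eta_voltage x0 y0.
split=> [// | vprod_conn].
rewrite -(pred_ext stabE).
have vprod_pm := vprod_premaniplex adjX_pm adjY_pm eta_voltage.
exact: connected_premaniplex_coset_iso vprod_pm vprod_conn.
Qed.
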